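(* Let $\Gamma$ be a 3-colex, $c\neq c'$ colors, $E$ a $Z$-type error on the color code on $\Gamma$, and $S$ a $Z$-stabilizer of the 3D toric code on $\Gamma^{*\setminus cc'}$. Then there is a $Z$-stabilizer $\overline S$ of the color code such that $$\delta E+\sum_{e:\,S_e\neq I}e=\delta(E\overline S),$$ where sums of edges are mod 2.
   Context: Colors are $\{r,b,g,y\}$. A 3-colex $\Gamma$ is a 3-dimensional cell complex without boundary in which every vertex is 4-valent and lies in exactly four 3-cells, and whose 3-cells are properly 4-colored: every face lies in exactly two 3-cells, which have different colors. The dual complex $\Gamma^*$ has an $i$-cell for every $(3-i)$-cell of $\Gamma$, with incidences reversed; every 3-cell of $\Gamma^*$ is a tetrahedron. A vertex of $\Gamma^*$ is given the color of the corresponding 3-cell of $\Gamma$, so the four vertices of each tetrahedron have distinct colors. An edge with endpoint colors $x,y$ is an $xy$-edge. The 3D color code on $\Gamma$ has one qubit per tetrahedron $\nu$ of $\Gamma^*$, $X$-stabilizer generators $\prod_{\nu\ni v}X_\nu$ for vertices $v$, and $Z$-stabilizer generators $B^Z_e=\prod_{\nu\supset e}Z_\nu$ for edges $e$; $Z$-stabilizers are products of the $B^Z_e$. For distinct colors $x,y$ with remaining colors $u,w$, $\pi_{xy}(\nu)$ is the unique $uw$-edge of tetrahedron $\nu$. The minor complex $\Gamma^{*\setminus cc'}$ (with $d,d'$ the remaining colors) has as vertices the $d$- and $d'$-vertices, as edges the $dd'$-edges of $\Gamma^*$, one face $f_e$ for each $cc'$-edge $e$ of $\Gamma^*$ whose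 boundary is the set of $dd'$-edges of the tetrahedra containing $e$, and one 3-cell for each vertex of color $c$ or $c'$. The 3D toric code on $\Gamma^{*\setminus cc'}$ has qubits on edges and $Z$-stabilizer generators $\prod_{t\in\partial f}Z_t$ for faces $f$; its $Z$-stabilizers are products of these. $S_e$ denotes the tensor factor of $S$ on edge $e$. The edge boundary of $E=\prod_{\nu\in\Omega}Z_\nu$ is $\delta E=\sum_{\nu\in\Omega}\sum_{\{x,y\}}\pi_{xy}(\nu)$, the sum over the six unordered pairs of distinct colors (i.e. over the six edges of $\nu$), mod 2. *)

From mathcomp Require Import all_boot.
Set Implicit Arguments. Unset Strict Implicit. Unset Printing Implicit Defensive.

(* Colors {r,b,g,y} are represented by 'I_4.  An unordered pair of distinct
   colors {x,y} is a set P : {set 'I_4} with #|P| = 2.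

   A 3-colex Gamma is represented through its dual complex Gamma^* :
   - cV : vertices of Gamma^* (= 3-cells of Gamma), colored by vcol;
   - cE : edges of Gamma^* (= faces of Gamma), with endpoint sets eends;
   - cF : triangles of Gamma^* (= edges of Gamma);
   - cT : tetrahedra of Gamma^* (= vertices of Gamma);
   - tv t x : the vertex of color x of tetrahedron t;
   - te t P : the edge of t whose endpoints have the colors in P (#|P| = 2);
   - tf t x : the triangle of t opposite to its vertex of color x.
   Axioms: vertex colors are as indicated, edge endpoints are as indicated,
   a triangle determines its opposite color and its three edges, and every
   triangle lies in exactly two tetrahedra (Gamma has no boundary: every edge
   of Gamma has two endpoint vertices). *)
Record colex3 := Colex3 {
  cV : finType; cE : finType; cF : finType; cT : finType;
  vcol : cV -> 'I_4;
  eends : cE -> {set cV};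
  tv : cT -> 'I_4 -> cV;
  te : cT -> {set 'I_4} -> cE;
  tf : cT -> 'I_4 -> cF;
  tv_col : forall t x, vcol (tv t x) = x;
  te_ends : forall t (P : {set 'I_4}), #|P| = 2 ->
     eends (te t P) = [set tv t x | x in P];
  tf_cons : forall t t' x x', tf t x = tf t' x' ->
     x = x' /\ (forall P : {set 'I_4}, #|P| = 2 -> x \notin P -> te t P = te t' P);
  tf_two : forall r : cF, #|[set t | [exists x, tf t x == r]]| = 2
}.

Section ColorCode.
Variable G : colex3.

Definition msum (I U : finType) (A : {set I}) (f : I -> {set U}) : {set U} :=
  [set u | odd #|[set i in A | u \in f i]|].

(* Symmetric difference = mod-2 sum of two chains / product of two Z-Paulis. *)
Definition symd (U : finType) (A B : {set U}) : {set U} := (A :\: B) :|: (B :\: A).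

Definition is_edge_col (e : cE G) (P : {set 'I_4}) : bool :=
  (@vcol G) @: eends e == P.

(* pi_{xy}(nu): the unique uw-edge of nu, {u,w} the complement of {x,y}. *)
Definition pi (nu : cT G) (P : {set 'I_4}) : cE G := te nu (~: P).

(* Edge boundary of the Z-type operator prod_{nu in Om} Z_nu (mod 2). *)
Definition delta (Om : {set cT G}) : {set cE G} :=
  [set g | odd #|[set p : cT G * {set 'I_4} |
                   [&& p.1 \in Om, #|p.2| == 2 & pi p.1 p.2 == g]]|].

Definition tedges (nu : cT G) : {set cE G} :=
  [set te nu P | P in [set P : {set 'I_4} | #|P| == 2]].

Definition BZ (e : cE G) : {set cT G} := [set nu | e \in tedges nu].

Definition cc_Zstab (Sb : {set cT G}) : Prop :=
  exists F : {set cE G}, Sb = msum F BZ.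

(* Minor complex Gamma^{* \ cc'}: boundary (mod 2 chain) of the face f_e for a
   cc'-edge e: the dd'-edges of the tetrahedra containing e. *)
Definition bd_face (c c' : 'I_4) (e : cE G) : {set cE G} :=
  msum [set nu | e \in tedges nu] (fun nu => [set te nu (~: [set c; c'])]).

(* Z-stabilizers of the 3D toric code on Gamma^{* \ cc'}, as sets of edges
   (the edges on which S acts nontrivially). *)
Definition tc_Zstab (c c' : 'I_4) (S : {set cE G}) : Prop :=
  exists F : {set cE G},
    (forall e, e \in F -> is_edge_col e [set c; c']) /\
    S = msum F (bd_face c c').

End ColorCode.

(* The edge boundary delta is a mod-2 linear map, so delta (E Sb) = delta E + delta Sb,
   and for Sb = prod_(e in F) B^Z_e it suffices to show delta (B^Z_e) = bd f_e for a
   cc'-edge e.  Sorting the six edges pi_P(nu), nu containing e, by P: the pairs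
   P = {c,c'} contribute exactly the dd'-edges of bd f_e.  For any other P pick a color
   x in P \ {c,c'}; the tetrahedra nu containing e with pi_P(nu) = g are then closed
   under crossing the triangle opposite to x (which contains both e and pi_P(nu)), and
   since every triangle lies in exactly two tetrahedra they come in pairs. *)

From Pilot Require Import Defs.
From mathcomp Require Import all_boot all_algebra zify.
Import GRing.Theory.

Set Implicit Arguments.
Unset Strict Implicit.
Unset Printing Implicit Defensive.

Local Open Scope ring_scope.

Definition z2 (b : bool) : 'Z_2 := b%:R.

Lemma z2_inj : injective z2.
Proof. by case; case=> // /eqP. Qed.

Lemma z2_addb a b : z2 (a (+) b) = z2 a + z2 b.
Proof. by case: a; case: b; apply/eqP. Qed.

Lemma z2_odd n : z2 (odd n) = n%:R.
Proof. by elim: n => [//|n IHn]; rewrite /= mulrS -IHn; case: (odd n); apply/eqP. Qed.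

Lemma z2_odd_card (T : finType) (A : {pred T}) (Q : pred T) :
  z2 (odd #|[set i in A | Q i]|) = \sum_(i in A) z2 (Q i).
Proof.
rewrite z2_odd -sum1_card natr_sum [RHS]big_mkcond [LHS]big_mkcond /=.
by apply: eq_bigr => i _; rewrite inE; case: (i \in A); case: (Q i).
Qed.

Lemma big_z2_mask (T : finType) (A : {set T}) (F : T -> 'Z_2) :
  \sum_(i in A) F i = \sum_i z2 (i \in A) * F i.
Proof.
rewrite big_mkcond; apply: eq_bigr => i _.
by rewrite /z2; case: (i \in A); rewrite ?mul1r ?mul0r.
Qed.

Lemma in_symd (U : finType) (A B : {set U}) u :
  (u \in symd A B) = (u \in A) (+) (u \in B).
Proof. by rewrite !inE; case: (u \in A); case: (u \in B). Qed.

Lemma z2_msum (I U : finType) (A : {set I}) (f : I -> {set U}) u :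
  z2 (u \in msum A f) = \sum_(i in A) z2 (u \in f i).
Proof. by rewrite inE z2_odd_card. Qed.

Section KernelMaps.

Variables (I U : finType) (k : I -> U -> 'Z_2) (L : {set I} -> {set U}).
Hypothesis z2_L : forall A u, z2 (u \in L A) = \sum_(i in A) k i u.

Lemma kernel_symd A B : L (symd A B) = symd (L A) (L B).
Proof.
apply/setP => u; apply: z2_inj.
rewrite in_symd z2_addb !z2_L !big_z2_mask -big_split.
by apply: eq_bigr => i _; rewrite in_symd z2_addb mulrDl.
Qed.

Lemma kernel_msum (J : finType) (F : {set J}) (f : J -> {set I}) :
  L (msum F f) = msum F (L \o f).
Proof.
apply/setP => u; apply: z2_inj.
rewrite z2_L z2_msum big_z2_mask.
under eq_bigr do rewrite z2_msum big_distrl.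
rewrite exchange_big /=; apply: eq_bigr => j _.
by rewrite z2_L big_z2_mask.
Qed.

End KernelMaps.

Lemma eq_msum (I U : finType) (F : {set I}) (f g : I -> {set U}) :
  {in F, f =1 g} -> msum F f = msum F g.
Proof.
move=> Efg; apply/setP => u; rewrite !inE; congr (odd _); apply: eq_card => i.
by rewrite !inE; case: (boolP (i \in F)) => // /Efg ->.
Qed.

Lemma card_setC2 (P : {set 'I_4}) : #|P| = 2%N -> #|~: P| = 2%N.
Proof. by move=> P2; have := cardsC P; rewrite P2 card_ord; lia. Qed.

Section Colex.

Variable G : colex3.

Definition edge_mult (nu : cT G) (g : cE G) : 'Z_2 :=
  \sum_(P : {set 'I_4} | #|P| == 2%N) z2 (Defs.pi nu P == g).

Lemma z2_delta (Om : {set cT G}) g :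
  z2 (g \in delta Om) = \sum_(nu in Om) edge_mult nu g.
Proof.
rewrite pair_big_dep /= inE -z2_odd_card.
by congr (z2 (odd _)); apply: eq_card => p; rewrite !inE andbA.
Qed.

Lemma delta_symd (A B : {set cT G}) :
  delta (symd A B) = symd (delta A) (delta B).
Proof. exact: (kernel_symd z2_delta). Qed.

Lemma delta_msum (J : finType) (F : {set J}) (f : J -> {set cT G}) :
  delta (msum F f) = msum F (fun j => delta (f j)).
Proof. exact: (kernel_msum z2_delta). Qed.

Lemma te_colors (t : cT G) (P : {set 'I_4}) :
  #|P| = 2%N -> (@vcol G) @: eends (te t P) = P.
Proof.
move=> P2; rewrite te_ends // -imset_comp.
by rewrite (eq_imset _ (tv_col t)) imset_id.
Qed.

Lemma even_card_tf_closed (x : 'I_4) (X : {set cT G}) :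
  (forall nu t y, nu \in X -> tf t y = tf nu x -> t \in X) -> ~~ odd #|X|.
Proof.
move=> closedX.
suff -> : #|X| = (\sum_(r in [set tf nu x | nu in X]) 2)%N.
  by rewrite sum_nat_const oddM andbF.
rewrite -sum1_card (partition_big_imset (fun nu => tf nu x)) /=.
apply: eq_bigr => _ /imsetP [nu Xnu ->].
rewrite sum1dep_card -(tf_two (tf nu x)); apply: eq_card => t; rewrite !inE.
apply/andP/existsP => [[_ /eqP tf_t]|[y /eqP tf_t]]; first by exists x; rewrite tf_t.
by have [yx _] := tf_cons tf_t; subst y; split; [exact: closedX tf_t | apply/eqP].
Qed.

Variables c c' : 'I_4.
Hypothesis neq_cc' : c != c'.

Let card_cc' : #|[set c; c']| = 2%N.
Proof. by rewrite cards2 neq_cc'. Qed.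

Lemma in_tedges_cc' (e : cE G) (nu : cT G) : is_edge_col e [set c; c'] ->
  (e \in tedges nu) = (te nu [set c; c'] == e).
Proof.
move=> /eqP col_e; apply/imsetP/eqP => [[P] | <-].
  by rewrite inE => /eqP P2 e_def; move: col_e; rewrite e_def te_colors // => ->.
by exists [set c; c'] => //; rewrite inE card_cc'.
Qed.

Lemma delta_BZ (e : cE G) : is_edge_col e [set c; c'] -> delta (BZ e) = bd_face c c' e.
Proof.
move=> col_e; apply/setP => g; apply: z2_inj.
rewrite z2_delta z2_msum exchange_big /=.
rewrite (bigD1 [set c; c']) ?card_cc' //= [X in _ + X]big1 ?addr0.
  by apply: eq_bigr => nu _; rewrite inE eq_sym.
move=> P /andP [/eqP P2 neqP].
have /set0Pn [x] : P :\: [set c; c'] != set0.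
  by rewrite setD_eq0; apply: contra neqP => sPcc'; rewrite eqEcard sPcc' P2 card_cc'.
rewrite inE => /andP [x_ncc' xP].
rewrite -z2_odd_card (negbTE (even_card_tf_closed (x := x) _)) //.
move=> nu t y; rewrite !inE !(in_tedges_cc' _ col_e) => /andP [/eqP e_nu /eqP pi_nu].
move=> /tf_cons [y_x te_t]; subst y.
rewrite te_t // e_nu eqxx /= /Defs.pi te_t ?card_setC2 ?inE ?xP //.
by rewrite -pi_nu.
Qed.

End Colex.

Theorem lemma12 (G : colex3) (c c' : 'I_4) (E : {set cT G}) (S : {set cE G}) :
  c != c' -> tc_Zstab c c' S ->
  exists Sb : {set cT G}, cc_Zstab Sb /\
    symd (delta E) S = delta (symd E Sb).
Proof.
move=> neq_cc' [F [col_F ->]].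
exists (msum F (@BZ G)); split; first by exists F.
rewrite delta_symd delta_msum; congr (symd _ _).
by apply: eq_msum => e /col_F /(delta_BZ neq_cc').
Qed.
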